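(* Let $n,b$ be integers with $1<n<b$, and let $\Gamma_0$ be a strongly-connected edge-labelled subgraph of the $(n,b)$-Hoey-Sloane graph $\Gamma$. Then its reflection $\overline{\Gamma}_0$ is a strongly-connected edge-labelled subgraph of $\Gamma$.
   Context: Let $\lambda(x)$ denote the least non-negative residue of $x$ modulo $b$. The $(n,b)$-mother graph $M$ is the directed graph on vertex set $\{0,\ldots,b-1\}$ whose edges are the ordered pairs of digits $(d_1,d_2)$ with $\lambda(d_1+(b-n)d_2)\le n-1$. The $(n,b)$-Hoey-Sloane graph $\Gamma$ is the edge-labelled directed graph on states $\{0,\ldots,n-1\}$ in which $(c_1,c_2)$ is an edge precisely when $\{(d_1,d_2)\in E(M)\mid n d_2-d_1+c_1=b c_2\}$ is nonempty, this set being its label set. For a digit $d$ put $\overline d=b-1-d$, for a state $c$ put $\overline c=n-1-c$. The reflection $\overline{\Gamma}_0$ of an edge-labelled subgraph $\Gamma_0$ of $\Gamma$ has vertices $\overline{c}$ ($c$ a vertex of $\Gamma_0$), edges $(\overline{c}_1,\overline{c}_2)$ ($(c_1,c_2)$ an edge of $\Gamma_0$), and label $(\overline{d}_1,\overline{d}_2)$ on $(\overline{c}_1,\overline{c}_2)$ whenever $(d_1,d_2)$ labels $(c_1,c_2)$ in $\Gamma_0$. *)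

From mathcomp Require Import all_boot all_order all_algebra.
Set Implicit Arguments. Unset Strict Implicit. Unset Printing Implicit Defensive.
Import GRing.Theory.

(* Digits are elements of 'I_b, states are elements of 'I_n. *)

(* lambda(x) = x mod b; the mother-graph edge condition.
   Since 0 <= n < b, x = d1 + (b-n) d2 is a natural number. *)
Definition mother_edge (n b : nat) (d1 d2 : 'I_b) : bool :=
  ((d1 + (b - n) * d2) %% b <= n - 1)%N.

Definition hs_label (n b : nat) (c1 c2 : 'I_n) (d1 d2 : 'I_b) : bool :=
  @mother_edge n b d1 d2 &&
  ((n%:Z * d2%:Z - d1%:Z + c1%:Z)%R == (b%:Z * c2%:Z)%R).

Definition hs_edge (n b : nat) (c1 c2 : 'I_n) : bool :=
  [exists d1 : 'I_b, exists d2 : 'I_b, @hs_label n b c1 c2 d1 d2].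

Record elgraph (n b : nat) := ELGraph {
  vset : {set 'I_n};
  eset : rel 'I_n;
  lab  : 'I_n -> 'I_n -> 'I_b -> 'I_b -> bool
}.

Definition is_el_subgraph (n b : nat) (G : elgraph n b) : Prop :=
  (forall c1 c2, eset G c1 c2 ->
     [/\ c1 \in vset G, c2 \in vset G & @hs_edge n b c1 c2]) /\
  (forall c1 c2, eset G c1 c2 -> exists d1 d2, lab G c1 c2 d1 d2) /\
  (forall c1 c2 d1 d2, lab G c1 c2 d1 d2 ->
     eset G c1 c2 /\ @hs_label n b c1 c2 d1 d2).

Definition strongly_connected (n b : nat) (G : elgraph n b) : Prop :=
  forall u v, u \in vset G -> v \in vset G -> connect (eset G) u v.

Definition reflection (n b : nat) (G : elgraph n b) : elgraph n b :=
  ELGraph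
    [set rev_ord c | c in vset G]
    (fun x y => [exists c1, exists c2,
        [&& eset G c1 c2, x == rev_ord c1 & y == rev_ord c2]])
    (fun x y e1 e2 => [exists c1, exists c2, exists d1, exists d2,
        [&& lab G c1 c2 d1 d2, x == rev_ord c1, y == rev_ord c2,
            e1 == rev_ord d1 & e2 == rev_ord d2]]).

From mathcomp Require Import all_boot all_order all_algebra zify.

(* The carry equation n d2 - d1 + c1 = b c2 already forces
   d1 + (b - n) d2 = c1 (mod b), so the mother-graph condition on a label is
   automatic; and substituting c |-> n-1-c, d |-> b-1-d into the carry equation
   changes both sides by the same amount n b - b, so labels are mapped to
   labels.  Reflection is then a graph homomorphism, which preserves
   directed paths. *)

Section Labels.

Variables n b : nat.
Hypothesis le_nb : (n <= b)%N.

Lemma carry_eqE (c1 c2 : 'I_n) (d1 d2 : 'I_b) :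
  ((n%:Z * d2%:Z - d1%:Z + c1%:Z)%R == (b%:Z * c2%:Z)%R) =
  (n * d2 + c1 == b * c2 + d1)%N.
Proof. by apply/eqP/eqP; lia. Qed.

Lemma carry_mother_edge (c1 c2 : 'I_n) (d1 d2 : 'I_b) :
  (n * d2 + c1 = b * c2 + d1)%N -> mother_edge n d1 d2.
Proof.
move=> carry; rewrite /mother_edge.
have shift : (c2 * b + (d1 + (b - n) * d2) = d2 * b + c1)%N.
  by rewrite mulnBl; nia.
have -> : ((d1 + (b - n) * d2) %% b = c1)%N.
  rewrite -(modnMDl c2) shift modnMDl modn_small //.
  exact: leq_trans (ltn_ord c1) le_nb.
by have := ltn_ord c1; lia.
Qed.

Lemma hs_labelE (c1 c2 : 'I_n) (d1 d2 : 'I_b) :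
  hs_label c1 c2 d1 d2 = (n * d2 + c1 == b * c2 + d1)%N.
Proof.
rewrite /hs_label carry_eqE.
by case: eqP => [/carry_mother_edge -> | _]; rewrite ?andbF.
Qed.

Lemma hs_label_rev (c1 c2 : 'I_n) (d1 d2 : 'I_b) :
  hs_label (rev_ord c1) (rev_ord c2) (rev_ord d1) (rev_ord d2) =
  hs_label c1 c2 d1 d2.
Proof.
rewrite !hs_labelE /=.
have := ltn_ord c1; have := ltn_ord c2; have := ltn_ord d1; have := ltn_ord d2.
by move=> *; apply/eqP/eqP; nia.
Qed.

Lemma hs_edge_rev (c1 c2 : 'I_n) :
  hs_edge b (rev_ord c1) (rev_ord c2) = hs_edge b c1 c2.
Proof.
apply/existsP/existsP => -[d1 /existsP [d2 L]].
- exists (rev_ord d1); apply/existsP; exists (rev_ord d2).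
  by rewrite -hs_label_rev !rev_ordK.
- by exists (rev_ord d1); apply/existsP; exists (rev_ord d2); rewrite hs_label_rev.
Qed.

End Labels.

Lemma connect_homo (T T' : finType) (e : rel T) (e' : rel T') (f : T -> T') :
  {homo f : x y / e x y >-> e' x y} ->
  forall x y, connect e x y -> connect e' (f x) (f y).
Proof.
move=> f_homo x y /connectP [p ep ->]; apply/connectP.
by exists (map f p); [apply: homo_path ep | rewrite last_map].
Qed.

Section Reflection.

Variables n b : nat.
Variable G : elgraph n b.

Lemma reflection_eset c1 c2 :
  eset G c1 c2 -> eset (reflection G) (rev_ord c1) (rev_ord c2).
Proof. by move=> e; apply/existsP; exists c1; apply/existsP; exists c2; rewrite e !eqxx. Qed.

Lemma reflection_lab c1 c2 d1 d2 : lab G c1 c2 d1 d2 ->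
  lab (reflection G) (rev_ord c1) (rev_ord c2) (rev_ord d1) (rev_ord d2).
Proof.
move=> L; apply/existsP; exists c1; apply/existsP; exists c2.
by apply/existsP; exists d1; apply/existsP; exists d2; rewrite L !eqxx.
Qed.

Lemma reflection_el_subgraph :
  (n <= b)%N -> is_el_subgraph G -> is_el_subgraph (reflection G).
Proof.
move=> le_nb [edgeP [labelled labP]]; split; [|split].
- move=> x y /existsP [c1 /existsP [c2 /and3P [e /eqP -> /eqP ->]]].
  have [v1 v2 E] := edgeP _ _ e.
  by split; rewrite ?hs_edge_rev // imset_f.
- move=> x y /existsP [c1 /existsP [c2 /and3P [e /eqP -> /eqP ->]]].
  have [d1 [d2 L]] := labelled _ _ e.
  by exists (rev_ord d1), (rev_ord d2); apply: reflection_lab.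
- move=> x y e1 e2 /existsP [c1 /existsP [c2 /existsP [d1 /existsP [d2
    /and5P [L /eqP -> /eqP -> /eqP -> /eqP ->]]]]].
  have [e H] := labP _ _ _ _ L.
  by split; [apply: reflection_eset | rewrite hs_label_rev].
Qed.

Lemma reflection_strongly_connected :
  strongly_connected G -> strongly_connected (reflection G).
Proof.
move=> scG _ _ /imsetP [u Hu ->] /imsetP [v Hv ->].
exact: connect_homo reflection_eset _ _ (scG _ _ Hu Hv).
Qed.

End Reflection.

Theorem corollary14 (n b : nat) (Hn : (1 < n)%N) (Hnb : (n < b)%N)
  (G0 : elgraph n b) :
  is_el_subgraph G0 -> strongly_connected G0 ->
  is_el_subgraph (reflection G0) /\ strongly_connected (reflection G0).
Proof.
move=> subG0 scG0; split.
- exact: reflection_el_subgraph (ltnW Hnb) subG0.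
- exact: reflection_strongly_connected.
Qed.
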